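(* For any $\beta\in[0,\infty)$ there exists a weight sequence $\boldsymbol{M}^\beta$ such that: (i) $\boldsymbol{M}^\beta$ satisfies $\operatorname{(sm)}$; (ii) $\boldsymbol{M}^\beta$ does not satisfy $\operatorname{(dc)}$ (and hence not $\operatorname{(mg)}$ either); (iii) $\gamma(\boldsymbol{M}^\beta)=\beta$.
   Context: A weight sequence is a sequence $\boldsymbol{M}=(M_p)_{p\in\mathbb{N}_0}$ of positive reals with $M_0=1$, $M_p^2\le M_{p-1}M_{p+1}$ ($p\ge1$) and $m_p=M_{p+1}/M_p\to\infty$. $\operatorname{(sm)}$: $\log(m_{p+1}/m_p)\le C_0H^{p+1}$ for all $p$, some $C_0>0$, $H>1$. $\operatorname{(dc)}$: $M_{p+1}\le C_0H^{p+1}M_p$ for all $p$, some $C_0>0$, $H>1$. $\operatorname{(mg)}$: $M_{p+q}\le C_0H^{p+q}M_pM_q$ for all $p,q$, some $C_0>0,H>1$. Almost increasing: $c_p\le ac_q$ for $q\ge p$, some $a>0$. $\gamma(\boldsymbol{M})=\sup\{\mu>0:(m_p/(p+1)^\mu)_p\text{ almost increasing}\}\in[0,\infty]$. *)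

From HB Require Import structures.
From mathcomp Require Import all_boot all_order all_algebra.
From mathcomp Require Import all_classical all_reals all_analysis.
Set Implicit Arguments. Unset Strict Implicit. Unset Printing Implicit Defensive.
Import Order.TTheory GRing.Theory Num.Theory.
Import numFieldNormedType.Exports.
Local Open Scope classical_set_scope.
Local Open Scope ring_scope.

Section WeightSeq.
Variable R : realType.

Definition quot (M : nat -> R) : nat -> R := fun p => M p.+1 / M p.

Definition weight_seq (M : nat -> R) : Prop :=
  [/\ M 0%N = 1,
      (forall p, 0 < M p),
      (forall p, (1 <= p)%N -> M p ^+ 2 <= M p.-1 * M p.+1) &
      (quot M @ \oo --> +oo)].

Definition cond_sm (M : nat -> R) : Prop :=
  exists C0 H : R, 0 < C0 /\ 1 < H /\
    forall p, ln (quot M p.+1 / quot M p) <= C0 * H ^+ p.+1.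

Definition cond_dc (M : nat -> R) : Prop :=
  exists C0 H : R, 0 < C0 /\ 1 < H /\
    forall p, M p.+1 <= C0 * H ^+ p.+1 * M p.

Definition cond_mg (M : nat -> R) : Prop :=
  exists C0 H : R, 0 < C0 /\ 1 < H /\
    forall p q, M (p + q)%N <= C0 * H ^+ (p + q) * M p * M q.

Definition almost_increasing (c : nat -> R) : Prop :=
  exists a : R, 0 < a /\ forall p q, (p <= q)%N -> c p <= a * c q.

Definition gamma_set (M : nat -> R) : set R :=
  [set mu : R | 0 < mu /\
     almost_increasing (fun p => quot M p / (p.+1%:R `^ mu))].

(* gamma(M) = sup of that set in [0, +oo] (sup of the empty set is 0) *)
Definition gamma (M : nat -> R) : \bar R :=
  ereal_sup ([set 0%E] `|` [set (mu%:E)%E | mu in gamma_set M]).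

End WeightSeq.

From HB Require Import structures.
From mathcomp Require Import all_boot all_order all_algebra.
From mathcomp Require Import all_classical all_reals all_analysis.
From mathcomp Require Import zify lra.
Import Order.TTheory GRing.Theory Num.Theory.
Set Implicit Arguments.
Unset Strict Implicit.
Unset Printing Implicit Defensive.
Local Open Scope ring_scope.

(* The quotients are m_p = (p+1)^beta * exp (h p ^ 2), where h p is the
   largest double power of two 2^2^k not exceeding p.  Since h p <= p + 2,
   log m_p grows at most quadratically, which gives (sm); but at p = 2^2^k we
   get m_p >= exp (p^2), which no geometric bound C H^p can dominate, so (dc),
   and with it (mg), fails.  Dividing m_p by (p+1)^beta leaves the
   nondecreasing exp (h p ^ 2), so beta lies in the gamma set; for mu > beta,
   exp (h p ^ 2) is constant on the block [2^2^k, 2^(2^k + k)], along which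
   (p+1)^(mu - beta) grows by a factor about 2^(k (mu - beta)), so
   m_p / (p+1)^mu is not almost increasing. *)

(* The largest 2^2^k <= p, or 2 when p < 2. *)
Definition tower_floor (p : nat) : nat := 2 ^ 2 ^ trunc_log 2 (trunc_log 2 p).

Lemma leq_tower_floor p q : (p <= q)%N -> (tower_floor p <= tower_floor q)%N.
Proof. by move=> le_pq; rewrite leq_pexp2l // leq_pexp2l // !leq_trunc_log. Qed.

Lemma tower_floor_le p : (tower_floor p <= p + 2)%N.
Proof.
rewrite /tower_floor; have [->|lp_gt0] := posnP (trunc_log 2 p).
  by rewrite trunc_log0 leq_addl.
have p_gt0 : (0 < p)%N by case: p lp_gt0 => //; rewrite trunc_log0.
apply: leq_trans (leq_addr 2 _); apply: leq_trans (trunc_logP (isT : 1 < 2)%N p_gt0).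
by rewrite leq_pexp2l // trunc_logP.
Qed.

Lemma ltn_tower_floor_sqr p : (p < tower_floor p ^ 2)%N.
Proof.
rewrite /tower_floor -expnM -expnSr.
apply: leq_trans (trunc_log_ltn p (isT : 1 < 2)%N) _.
by rewrite leq_pexp2l // trunc_log_ltn.
Qed.

Lemma tower_floorE k : tower_floor (2 ^ 2 ^ k) = (2 ^ 2 ^ k)%N.
Proof. by rewrite /tower_floor !trunc_expnK. Qed.

Lemma tower_floor_flat k : tower_floor (2 ^ (2 ^ k + k)) = (2 ^ 2 ^ k)%N.
Proof.
rewrite /tower_floor trunc_expnK // (@trunc_log_eq 2 k) //.
by rewrite leq_addr /= expnS mul2n -addnn ltn_add2l ltn_expl.
Qed.

Lemma sqr_addn2_le_exp4 p : ((p + 2) ^ 2 <= 4 * 4 ^ p)%N.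
Proof.
elim: p => [//|p IHp].
have step : ((p.+1 + 2) ^ 2 <= 4 * (p + 2) ^ 2)%N.
  by rewrite -[4%N]/(2 ^ 2)%N -expnMn leq_exp2r //; lia.
apply: leq_trans step _.
by rewrite [X in (_ <= 4 * X)%N]expnS leq_pmul2l.
Qed.

Lemma tower_floor_flat_pairs K :
  exists p q, tower_floor p = tower_floor q /\ (2 ^ K * p.+1 <= q.+1)%N.
Proof.
exists (2 ^ 2 ^ K.+1)%N, (2 ^ (2 ^ K.+1 + K.+1))%N.
rewrite tower_floorE tower_floor_flat; split => //.
rewrite expnD [(2 ^ K.+1)%N]expnS.
have : (0 < 2 ^ 2 ^ K.+1)%N by rewrite expn_gt0.
move: (2 ^ 2 ^ K.+1)%N (2 ^ K)%N => x y; nia.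
Qed.

Section WeightSequences.
Variable R : realType.
Implicit Types (m M : nat -> R) (beta mu d : R).

Definition prod_quot m (p : nat) : R := \prod_(i < p) m i.

Lemma prod_quotS m p : prod_quot m p.+1 = prod_quot m p * m p.
Proof. by rewrite /prod_quot big_ord_recr. Qed.

Section PositiveQuotients.
Variable m : nat -> R.
Hypothesis m_gt0 : forall p, 0 < m p.

Lemma prod_quot_gt0 p : 0 < prod_quot m p.
Proof. by apply: prodr_gt0 => i _; exact: m_gt0. Qed.

Lemma quot_prod_quot : quot (prod_quot m) = m.
Proof.
apply: funext => p; rewrite /quot prod_quotS [prod_quot m p * _]mulrC.
by rewrite mulfK ?gt_eqF ?prod_quot_gt0.
Qed.

Lemma weight_seq_prod_quot :
  {homo m : p q / (p <= q)%N >-> p <= q} -> (m @ \oo --> +oo)%classic ->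
  weight_seq (prod_quot m).
Proof.
move=> m_nd m_oo; split; rewrite ?quot_prod_quot //.
- by rewrite /prod_quot big_ord0.
- exact: prod_quot_gt0.
- case=> // p _ /=; rewrite !prod_quotS expr2 -!mulrA ler_pM2l ?prod_quot_gt0 //.
  by rewrite mulrCA ler_pM2l ?prod_quot_gt0 // ler_pM2l ?m_gt0 // m_nd.
Qed.

End PositiveQuotients.

Lemma cond_mg_dc M : 0 < M 1%N -> cond_mg M -> cond_dc M.
Proof.
move=> M1_gt0 [C [H [C_gt0 [H_gt1 mgM]]]].
exists (C * M 1%N), H; split; first exact: mulr_gt0; split => // p.
by have := mgM p 1%N; rewrite addn1 mulrAC [_ * M 1%N * _]mulrAC.
Qed.

Lemma cond_sm_ln_quot M (C H : R) : 0 < C -> 1 < H ->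
  (forall p, 1 <= quot M p) -> (forall p, ln (quot M p) <= C * H ^+ p) ->
  cond_sm M.
Proof.
move=> C_gt0 H_gt1 m_ge1 ln_m_le; exists C, H; split => //; split => // p.
move: (quot M) m_ge1 ln_m_le => m m_ge1 ln_m_le.
have m_gt0 q : 0 < m q := lt_le_trans ltr01 (m_ge1 q).
apply: le_trans (ln_m_le p.+1); rewrite ler_ln ?posrE ?divr_gt0 //.
by rewrite ler_pdivrMr // ler_peMr // ltW.
Qed.

Lemma geometric_lt_expR_sqr (C H : R) : 0 < C -> 0 < H ->
  exists N, forall n, (N <= n)%N -> C * H ^+ n.+1 < expR (n%:R ^+ 2).
Proof.
move=> C_gt0 H_gt0; set a := `|ln C|; set b := `|ln H|.
exists (Num.bound (a + b + 2)) => n le_Nn.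
have a_ge0 : 0 <= a := normr_ge0 _; have b_ge0 : 0 <= b := normr_ge0 _.
have bound_lt_n : a + b + 2 < n%:R.
  by apply: lt_le_trans (archi_boundP _) _; [lra | rewrite ler_nat].
rewrite -[C * _]lnK ?posrE ?mulr_gt0 ?exprn_gt0 // ltr_expR lnM ?posrE ?exprn_gt0 //.
rewrite lnXn // -[ln H *+ _]mulr_natr -natr1.
have := ler_norm (ln C); have := ler_norm (ln H); rewrite -/a -/b.
(* ln C + (n + 1) ln H <= a + (n + 1) b < n ^ 2 as soon as n > a + b + 2. *)
move: (n%:R : R) bound_lt_n (ln C) (ln H) => x lt_x c h c_le h_le.
have : 0 <= (x - 1) * a by apply: mulr_ge0; lra.
have : 0 <= (x - 1) * b by apply: mulr_ge0; lra.
have : 0 <= x * (x - a - b - 2) by apply: mulr_ge0; lra.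
have : h * (x + 1) <= b * (x + 1) by rewrite ler_pM2r; lra.
nra.
Qed.

Lemma not_cond_dc_quot M : (forall p, 0 < M p) ->
  (forall N, exists2 n, (N <= n)%N & expR (n%:R ^+ 2) <= quot M n) ->
  ~ cond_dc M.
Proof.
move=> M_gt0 big_quot [C [H [C_gt0 [H_gt1 dcM]]]].
have [N geo_lt] := geometric_lt_expR_sqr C_gt0 (lt_trans ltr01 H_gt1).
have [n le_Nn quot_ge] := big_quot N.
have := lt_le_trans (geo_lt n le_Nn) quot_ge.
by rewrite /quot ltr_pdivlMr // ltNge dcM.
Qed.

Lemma gamma_eq M beta : 0 <= beta ->
  (forall mu, gamma_set M mu -> mu <= beta) -> (0 < beta -> gamma_set M beta) ->
  gamma M = beta%:E.
Proof.
move=> beta_ge0 gamma_le beta_in; apply/le_anti/andP; split.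
  by apply: ge_ereal_sup => _ [->|[mu /gamma_le mu_le <-]]; rewrite lee_fin.
have [->|beta_gt0] := eqVneq beta 0; first by apply: ereal_sup_ubound; left.
apply: ereal_sup_ubound; right; exists beta => //.
by apply: beta_in; rewrite lt_def beta_gt0.
Qed.

Lemma almost_increasing_nondecreasing (c : nat -> R) :
  {homo c : p q / (p <= q)%N >-> p <= q} -> almost_increasing c.
Proof. by move=> c_nd; exists 1; split => // p q /c_nd; rewrite mul1r. Qed.

Lemma powR_exp2n_ge d (K : nat) : 1 + d * (K%:R * ln 2) <= (2 ^ K)%:R `^ d.
Proof.
rewrite /powR pnatr_eq0 expn_eq0 /= natrX lnXn // -[ln _ *+ _]mulr_natr.
by rewrite [ln _ * _]mulrC expR_ge1Dx.
Qed.

Lemma not_almost_increasing_flat (s : nat -> R) d : 0 < d -> (forall p, 0 < s p) ->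
  (forall K, exists p q, s p = s q /\ (2 ^ K * p.+1 <= q.+1)%N) ->
  ~ almost_increasing (fun p => s p / p.+1%:R `^ d).
Proof.
move=> d_gt0 s_gt0 flat [a [a_gt0 incr]].
have ln2_gt0 : 0 < ln (2 : R) by rewrite ln_gt0 // ltr1n.
have [K lt_aK] : exists K : nat, a < 1 + d * (K%:R * ln 2).
  exists (Num.bound (a / (d * ln 2))).
  have := archi_boundP (ltW (divr_gt0 a_gt0 (mulr_gt0 d_gt0 ln2_gt0))).
  rewrite ltr_pdivrMr ?mulr_gt0 // mulrCA; lra.
have [p [q [s_pq le_pq]]] := flat K.
have le_pq' : (p <= q)%N.
  by rewrite -ltnS; apply: leq_trans le_pq; rewrite leq_pmull // expn_gt0.
have := incr p q le_pq'; rewrite /= s_pq.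
set x := p.+1%:R `^ d; set y := q.+1%:R `^ d.
have x_gt0 : 0 < x by rewrite powR_gt0 ?ltr0n.
have y_gt0 : 0 < y by rewrite powR_gt0 ?ltr0n.
rewrite mulrCA ler_pM2l // -[x^-1]mul1r ler_pdivlMr // mul1r mulrC ler_pdivrMr //.
move=> y_le_ax; suff : (2 ^ K)%:R `^ d <= a by have := powR_exp2n_ge d K; lra.
rewrite -(ler_pM2r x_gt0); apply: le_trans y_le_ax.
rewrite -powRM ?ler0n // -natrM.
by apply: ge0_ler_powR; rewrite ?nnegrE ?ler0n ?ler_nat // ltW.
Qed.

End WeightSequences.

Section Construction.
Variables (R : realType) (beta : R).
Hypothesis beta_ge0 : 0 <= beta.

Definition tower_weight (p : nat) : R := expR (tower_floor p ^ 2)%:R.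

Definition quot_beta (p : nat) : R := p.+1%:R `^ beta * tower_weight p.

Lemma tower_weight_gt0 p : 0 < tower_weight p.
Proof. exact: expR_gt0. Qed.

Lemma tower_weight_ge p : 1 + (tower_floor p ^ 2)%:R <= tower_weight p.
Proof. exact: expR_ge1Dx. Qed.

Lemma tower_weight_nondecreasing :
  {homo tower_weight : p q / (p <= q)%N >-> p <= q}.
Proof.
by move=> p q le_pq; rewrite ler_expR ler_nat leq_exp2r // leq_tower_floor.
Qed.

Lemma powR_beta_ge1 p : 1 <= p.+1%:R `^ beta.
Proof.
rewrite /powR pnatr_eq0 /=; apply: le_trans (expR_ge1Dx _).
by rewrite lerDl mulr_ge0 // ln_ge0 // ler1n.
Qed.

Lemma quot_beta_gt0 p : 0 < quot_beta p.
Proof. by rewrite mulr_gt0 ?powR_gt0 ?ltr0n ?tower_weight_gt0. Qed.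

Lemma quot_beta_ge_tower_weight p : tower_weight p <= quot_beta p.
Proof.
by rewrite -[leLHS]mul1r ler_pM2r ?tower_weight_gt0 // powR_beta_ge1.
Qed.

Lemma quot_beta_ge1 p : 1 <= quot_beta p.
Proof.
apply: le_trans (quot_beta_ge_tower_weight p); apply: le_trans (tower_weight_ge p).
by rewrite lerDl.
Qed.

Lemma quot_beta_nondecreasing : {homo quot_beta : p q / (p <= q)%N >-> p <= q}.
Proof.
move=> p q le_pq; apply: ler_pM; rewrite ?powR_ge0 ?(ltW (tower_weight_gt0 _)) //.
  by apply: (ge0_ler_powR beta_ge0); rewrite ?nnegrE ?ler0n ?ler_nat.
exact: tower_weight_nondecreasing.
Qed.

Lemma quot_beta_cvgy : (quot_beta @ \oo --> +oo)%classic.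
Proof.
apply/cvgryPge => A; apply: filterS (nbhs_infty_ger A) => n /= le_An.
apply: (le_trans le_An); apply: le_trans (quot_beta_ge_tower_weight n).
apply: le_trans (tower_weight_ge n); rewrite addrC natr1 ler_nat.
exact/leqW/ltnW/ltn_tower_floor_sqr.
Qed.

Lemma ln_quot_beta_le p : ln (quot_beta p) <= 4 * (beta + 1) * 4 ^+ p.
Proof.
rewrite lnM ?posrE ?powR_gt0 ?ltr0n ?tower_weight_gt0 // ln_powR expRK.
have X_ge : ((p + 2) ^ 2)%:R <= 4 * 4 ^+ p :> R.
  by rewrite -natrX -natrM ler_nat sqr_addn2_le_exp4.
have ln_le : ln p.+1%:R <= ((p + 2) ^ 2)%:R :> R.
  apply: le_trans (ltW (ln_sublinear _)) _; rewrite ?ltr0n // ler_nat; nia.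
have tf_le : (tower_floor p ^ 2)%:R <= ((p + 2) ^ 2)%:R :> R.
  by rewrite ler_nat leq_exp2r // tower_floor_le.
have := ler_wpM2l beta_ge0 (le_trans ln_le X_ge); lra.
Qed.

Lemma quot_beta_div_powR mu p :
  quot_beta p / p.+1%:R `^ mu = tower_weight p / p.+1%:R `^ (mu - beta).
Proof.
rewrite powRB ?pnatr_eq0 ?implybT // invf_div mulrA.
by rewrite /quot_beta [_ `^ beta * _]mulrC.
Qed.

Lemma weight_seq_beta : weight_seq (prod_quot quot_beta).
Proof.
exact: weight_seq_prod_quot quot_beta_gt0 quot_beta_nondecreasing quot_beta_cvgy.
Qed.

Lemma cond_sm_beta : cond_sm (prod_quot quot_beta).
Proof.
apply: (@cond_sm_ln_quot _ _ (4 * (beta + 1)) 4);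
  rewrite ?(quot_prod_quot quot_beta_gt0).
- by apply: mulr_gt0; rewrite ?ltr_wpDl.
- lra.
- exact: quot_beta_ge1.
- exact: ln_quot_beta_le.
Qed.

Lemma not_cond_dc_beta : ~ cond_dc (prod_quot quot_beta).
Proof.
apply: not_cond_dc_quot (prod_quot_gt0 quot_beta_gt0) _ => N.
rewrite (quot_prod_quot quot_beta_gt0); exists (2 ^ 2 ^ N)%N.
  exact/ltnW/(ltn_trans (ltn_expl N (isT : 1 < 2)%N))/ltn_expl.
apply: le_trans (quot_beta_ge_tower_weight _).
by rewrite /tower_weight tower_floorE -natrX.
Qed.

Lemma gamma_beta : gamma (prod_quot quot_beta) = beta%:E.
Proof.
apply: gamma_eq => // [mu [mu_gt0 incr]|beta_gt0].
  rewrite leNgt; apply/negP => lt_beta_mu.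
  apply: (@not_almost_increasing_flat _ tower_weight (mu - beta)).
  - by rewrite subr_gt0.
  - exact: tower_weight_gt0.
  - move=> K; have [p [q [tf_pq le_pq]]] := tower_floor_flat_pairs K.
    by exists p, q; rewrite /tower_weight tf_pq.
  move: incr; rewrite (quot_prod_quot quot_beta_gt0).
  by congr almost_increasing; apply: funext => p; rewrite quot_beta_div_powR.
split => //; rewrite (quot_prod_quot quot_beta_gt0).
apply: almost_increasing_nondecreasing.
move=> p q le_pq; rewrite !quot_beta_div_powR subrr !powRr0 !divr1.
exact: tower_weight_nondecreasing.
Qed.

End Construction.

Unset Implicit Arguments.

Theorem corollary4p12 (R : realType) (beta : R) :
  0 <= beta ->
  exists M : nat -> R,
    [/\ weight_seq M,
        cond_sm M,
        ~ cond_dc M,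
        ~ cond_mg M &
        gamma M = (beta%:E)%E].
Proof.
move=> beta_ge0; exists (prod_quot (quot_beta beta)); split.
- exact: weight_seq_beta.
- exact: cond_sm_beta.
- exact: not_cond_dc_beta.
- move/(cond_mg_dc (prod_quot_gt0 (quot_beta_gt0 beta) 1)).
  exact: not_cond_dc_beta.
- exact: gamma_beta.
Qed.
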